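(* Let $\mathbf{K}$ be a field of characteristic different from $2$ and let $A$ be a (not necessarily associative) algebra over $\mathbf{K}$ satisfying, for all $a,b\in A$, the identities $\langle a,a,b\rangle=0$, $\langle a,b,a\rangle=0$ and $\langle a,b,ab\rangle=0$, where $\langle a,b,c\rangle=(ab)c-a(bc)+b(ac)$. Then for all $a,b,c,d\in A$: (a) $\langle a,b,c\rangle$ is skew-symmetric in $a,b,c$; (b) $\langle ab,c,d\rangle+\langle ba,c,d\rangle=0$.
   Context: The product in $A$ is an arbitrary bilinear multiplication; no associativity or commutativity is assumed. *)

From mathcomp Require Import all_boot all_order all_algebra.
Set Implicit Arguments. Unset Strict Implicit. Unset Printing Implicit Defensive.
Import GRing.Theory.
Local Open Scope ring_scope.

Definition bilinear_mul (K : fieldType) (V : lmodType K) (mul : V -> V -> V) : Prop :=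
  (forall (k : K) (x y z : V), mul (k *: x + y) z = k *: mul x z + mul y z) /\
  (forall (k : K) (x y z : V), mul x (k *: y + z) = k *: mul x y + mul x z).

Definition tri (K : fieldType) (V : lmodType K) (mul : V -> V -> V) (a b c : V) : V :=
  mul (mul a b) c - mul a (mul b c) + mul b (mul a c).

From mathcomp Require Import all_boot all_order all_algebra.
Import GRing.Theory.
Local Open Scope ring_scope.

(* Polarizing <a,a,b> = 0 in a and <a,b,a> = 0 in a gives skew-symmetry in
   the first two and in the first and last arguments, hence full
   skew-symmetry. Since <a,a,b> = (aa)b, polarization also gives
   (ab + ba)c = 0: ab + ba is a left annihilator, and <x,c,d> = 0 for every
   left annihilator x. *)

Lemma skew_of_alternating (U W : zmodType) (f : U -> U -> W) :
  (forall x y z, f (x + y) z = f x z + f y z) ->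
  (forall x y z, f x (y + z) = f x y + f x z) ->
  (forall x, f x x = 0) ->
  forall x y, f y x = - f x y.
Proof.
move=> fDl fDr f_alt x y; apply: (addrI (f x y)); rewrite subrr.
by have := f_alt (x + y); rewrite fDl !fDr !f_alt add0r addr0.
Qed.

Lemma addrBACA (U : zmodType) (p q r s t u : U) :
  (p + q) - (r + s) + (t + u) = (p - r + t) + (q - s + u).
Proof. by rewrite opprD (addrACA p) (addrACA (p - r)). Qed.

Section NonassociativeAlgebra.

Variables (K : fieldType) (V : lmodType K) (mul : V -> V -> V).
Hypothesis mul_bilinear : bilinear_mul mul.

Lemma bilin_mulDl x y z : mul (x + y) z = mul x z + mul y z.
Proof. by case: mul_bilinear => mulZDl _; rewrite -[x]scale1r mulZDl !scale1r. Qed.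

Lemma bilin_mulDr x y z : mul x (y + z) = mul x y + mul x z.
Proof. by case: mul_bilinear => _ mulZDr; rewrite -[y]scale1r mulZDr !scale1r. Qed.

Lemma bilin_mul0l z : mul 0 z = 0.
Proof. by apply: (addrI (mul 0 z)); rewrite -bilin_mulDl !addr0. Qed.

Lemma bilin_mul0r z : mul z 0 = 0.
Proof. by apply: (addrI (mul z 0)); rewrite -bilin_mulDr !addr0. Qed.

Lemma triD1 x y b c : tri mul (x + y) b c = tri mul x b c + tri mul y b c.
Proof. by rewrite /tri !(bilin_mulDl, bilin_mulDr) addrBACA. Qed.

Lemma triD2 a x y c : tri mul a (x + y) c = tri mul a x c + tri mul a y c.
Proof. by rewrite /tri !(bilin_mulDl, bilin_mulDr) addrBACA. Qed.

Lemma triD3 a b x y : tri mul a b (x + y) = tri mul a b x + tri mul a b y.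
Proof. by rewrite /tri !(bilin_mulDl, bilin_mulDr) addrBACA. Qed.

Lemma tri_sqr a b : tri mul a a b = mul (mul a a) b.
Proof. by rewrite /tri subrK. Qed.

Lemma tri_left_annihilator x c d :
  (forall z, mul x z = 0) -> tri mul x c d = 0.
Proof. by move=> x_ann; rewrite /tri !x_ann bilin_mul0l bilin_mul0r subrr add0r. Qed.

Hypothesis tri_alt12 : forall a b, tri mul a a b = 0.
Hypothesis tri_alt13 : forall a b, tri mul a b a = 0.

Lemma tri_skew12 a b c : tri mul b a c = - tri mul a b c.
Proof.
apply: (@skew_of_alternating _ _ (fun a b => tri mul a b c)).
- by move=> x y z; rewrite triD1.
- by move=> x y z; rewrite triD2.
- by move=> x; exact: tri_alt12.
Qed.

Lemma tri_skew13 a b c : tri mul c b a = - tri mul a b c.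
Proof.
apply: (@skew_of_alternating _ _ (fun a c => tri mul a b c)).
- by move=> x y z; rewrite triD1.
- by move=> x y z; rewrite triD3.
- by move=> x; exact: tri_alt13.
Qed.

Lemma tri_skew23 a b c : tri mul a c b = - tri mul a b c.
Proof. by rewrite tri_skew13 tri_skew12 tri_skew13 opprK. Qed.

Lemma mul_anticomm_left_annihilator a b z : mul (mul a b + mul b a) z = 0.
Proof.
have skew : forall x y, mul (mul y x) z = - mul (mul x y) z.
  apply: (@skew_of_alternating _ _ (fun x y => mul (mul x y) z)).
  - by move=> x y w; rewrite !bilin_mulDl.
  - by move=> x y w; rewrite bilin_mulDr bilin_mulDl.
  - by move=> x; rewrite -tri_sqr.
by rewrite bilin_mulDl skew addNr.
Qed.

End NonassociativeAlgebra.

Theorem lemma2 (K : fieldType) (V : lmodType K) (mul : V -> V -> V)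
  (hK : 2 \notin [pchar K])
  (hmul : bilinear_mul mul)
  (h1 : forall a b : V, tri mul a a b = 0)
  (h2 : forall a b : V, tri mul a b a = 0)
  (h3 : forall a b : V, tri mul a b (mul a b) = 0) :
  (forall a b c : V,
     tri mul b a c = - tri mul a b c /\
     tri mul a c b = - tri mul a b c /\
     tri mul c b a = - tri mul a b c) /\
  (forall a b c d : V,
     tri mul (mul a b) c d + tri mul (mul b a) c d = 0).
Proof.
split=> [a b c | a b c d].
  by split; [|split]; [exact: tri_skew12 | exact: tri_skew23 | exact: tri_skew13].
rewrite -triD1 //; apply: tri_left_annihilator => // z.
exact: mul_anticomm_left_annihilator.
Qed.
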